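(* Let $\mathcal L^{(\alpha_H)}_n$ and $\mathcal L_n$ be the sum-level sets of the alternating and the classical Lüroth maps, as in the context. Then, as $n\to\infty$: (1) $\displaystyle\sum_{k=1}^n\lambda(\mathcal L_k)=\sum_{k=1}^n\lambda(\mathcal L^{(\alpha_H)}_k)\sim n\Big(\sum_{k=1}^n\frac1k\Big)^{-1}\sim\frac{n}{\log n}$; (2) $\displaystyle\lambda(\mathcal L_n)=\lambda(\mathcal L^{(\alpha_H)}_n)\sim\Big(\sum_{k=1}^n\frac1k\Big)^{-1}\sim\frac1{\log n}$.
   Context: $\lambda$ is Lebesgue measure on $\mathcal U=[0,1]$. The harmonic partition $\alpha_H=\{A_n\}$ has $A_n=(1/(n+1),1/n]$. The alternating Lüroth map is $L_{\alpha_H}(x)=-n(n+1)x+(n+1)$ for $x\in A_n$, $L_{\alpha_H}(0)=0$; its cylinders are $C(\ell_1,\dots,\ell_k)=\{x:L_{\alpha_H}^{i-1}(x)\in A_{\ell_i},\ i=1,\dots,k\}$ and $\mathcal L^{(\alpha_H)}_n$ is the union of all $C(\ell_1,\dots,\ell_k)$, $k\in\mathbb N$, with $\sum_i\ell_i=n$. The classical Lüroth map is $L(x)=n(n+1)x-n$ for $x\in[1/(n+1),1/n)$, $n\ge2$, $L(x)=2x-1$ for $x\in[1/2,1]$, $L(0)=0$; with digit intervals $B_1=[1/2,1]$, $B_n=[1/(n+1),1/n)$ for $n\ge2$, its cylinders are $\{x:L^{i-1}(x)\in B_{\ell_i},\ i=1,\dots,k\}$ and $\mathcal L_n$ is the union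 of those cylinders with $\sum_i\ell_i=n$. $a_n\sim b_n$ means $a_n/b_n\to1$. *)

From HB Require Import structures.
From mathcomp Require Import all_boot all_order all_algebra.
From mathcomp Require Import all_classical all_reals all_analysis.
Set Implicit Arguments. Unset Strict Implicit. Unset Printing Implicit Defensive.
Import Order.TTheory GRing.Theory Num.Theory.
Import numFieldNormedType.Exports.
Local Open Scope classical_set_scope.
Local Open Scope ring_scope.

Section Luroth.
Variable R : realType.

Definition unitI : set R := [set x | 0 <= x <= 1].

Definition harmA (n : nat) : set R :=
  [set x | (n.+1%:R)^-1 < x <= (n%:R)^-1].

(* alternating Lüroth map: for x in A_n, n = floor(1/x) *)
Definition Lalt (x : R) : R :=
  if x == 0 then 0 else
  let n : R := (Num.floor (x^-1))%:~R in
  - (n * (n + 1)) * x + (n + 1).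

Definition lurB (n : nat) : set R :=
  if n == 1%N then [set x | 2^-1 <= x <= 1]
  else [set x | (n.+1%:R)^-1 <= x < (n%:R)^-1].

(* classical Lüroth map: for x in B_n (n >= 2), n = ceil(1/x) - 1 *)
Definition Lcl (x : R) : R :=
  if x == 0 then 0 else
  if 2^-1 <= x then 2 * x - 1 else
  let n : R := (Num.ceil (x^-1) - 1)%:~R in
  n * (n + 1) * x - n.

Definition cylinder (T : R -> R) (D : nat -> set R) (s : seq nat) : set R :=
  [set x | unitI x /\ forall i, (i < size s)%N -> D (nth 0%N s i) (iter i T x)].

Definition sumlevel (T : R -> R) (D : nat -> set R) (n : nat) : set R :=
  [set x | exists s : seq nat, [/\ (0 < size s)%N, all (fun l => 0 < l)%N s,
            sumn s = n & cylinder T D s x]].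

Definition Lalt_level (n : nat) : set R := sumlevel Lalt harmA n.
Definition Lcl_level (n : nat) : set R := sumlevel Lcl lurB n.

Definition asym_equiv (a b : nat -> R) : Prop :=
  (fun n => a n / b n) @ \oo --> (1 : R).

Definition harm (n : nat) : R := \sum_(1 <= k < n.+1) (k%:R)^-1.

End Luroth.

From HB Require Import structures.
From mathcomp Require Import all_boot all_order all_algebra.
From mathcomp Require Import all_classical all_reals all_analysis.
From mathcomp Require Import ring lra zify.
Import Order.TTheory GRing.Theory Num.Theory.
Import numFieldNormedType.Exports.
Set Implicit Arguments. Unset Strict Implicit. Unset Printing Implicit Defensive.
Local Open Scope classical_set_scope.
Local Open Scope ring_scope.

(* On each digit interval, of length p_l = 1/(l(l+1)), both Lüroth maps have an affine
   branch onto [0,1]. So the digit-l preimage of a disjoint union of intervals of total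
   length t is again such a union, of length t p_l, and for either map the sum-level sets
   satisfy the renewal recursion λ(L_n) = Σ_l p_l λ(L_(n-l)): λ(L_n) = u_n, the renewal
   sequence of (p_l). The tails a_j = Σ_(l>j) p_l = 1/(j+1) give Σ_k a_(n-k) u_k = 1, and
   since a is log-convex, u is nonincreasing (Kaluza). These two facts squeeze u_n H_n
   to 1, where H_n is the harmonic number; summing, Σ_(k<=n) u_k ~ n/H_n, and
   H_n ~ log n. *)

(** * Sets sandwiched between unions of intervals *)

Section IntervalSandwich.
Variable R : realType.
Implicit Types (I : seq (R * R)) (S : set R).

Definition union_oo I : set R := [set x | has (fun p => p.1 < x < p.2) I].
Definition union_cc I : set R := [set x | has (fun p => p.1 <= x <= p.2) I].

Fixpoint disjoint_oo I : Prop :=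
  if I is p :: I' then (forall x, p.1 < x < p.2 -> ~ union_oo I' x) /\ disjoint_oo I'
  else True.

Definition unit_subintervals I :=
  all (fun p => (0 <= p.1) && (p.1 <= p.2) && (p.2 <= 1)) I.

Definition total_length I : R := \sum_(p <- I) (p.2 - p.1).

(* This pins down the Lebesgue measure of [S] without tracking the endpoints of the
   intervals, on which the two maps differ. *)
Definition sandwiched S (t : R) := exists I,
  [/\ unit_subintervals I, disjoint_oo I, union_oo I `<=` S, S `<=` union_cc I
    & total_length I = t].

Lemma union_oo_cons p I : union_oo (p :: I) = `]p.1, p.2[ `|` union_oo I.
Proof. by apply/seteqP; split => x /=; rewrite /union_oo /= in_itv /=; move/orP. Qed.

Lemma union_cc_cons p I : union_cc (p :: I) = `[p.1, p.2] `|` union_cc I.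
Proof. by apply/seteqP; split => x /=; rewrite /union_cc /= in_itv /=; move/orP. Qed.

Lemma union_oo_nil : union_oo [::] = set0.
Proof. by apply/seteqP; split. Qed.

Lemma union_cc_nil : union_cc [::] = set0.
Proof. by apply/seteqP; split. Qed.

Lemma measurable_union_oo I : measurable (union_oo I : set (measurableTypeR R)).
Proof.
elim: I => [|p I IH]; first by rewrite union_oo_nil.
by rewrite union_oo_cons; apply: measurableU.
Qed.

Lemma measurable_union_cc I : measurable (union_cc I : set (measurableTypeR R)).
Proof.
elim: I => [|p I IH]; first by rewrite union_cc_nil.
by rewrite union_cc_cons; apply: measurableU.
Qed.

Lemma lebesgue_measure_union_oo I : unit_subintervals I -> disjoint_oo I ->
  lebesgue_measure (union_oo I) = (total_length I)%:E.
Proof.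
elim: I => [|p I IH] /=.
  by rewrite union_oo_nil measure0 /total_length big_nil.
move=> /andP[/andP[/andP[p1_ge0 p12] _] okI] [p_disj disjI].
rewrite union_oo_cons measureU //; last 2 first.
- exact: measurable_union_oo.
- by apply/seteqP; split => x //= [] /[!in_itv] /= /p_disj.
change (lebesgue_measure `]p.1, p.2[%classic + lebesgue_measure (union_oo I)
  = (total_length (p :: I))%:E)%E.
rewrite IH // lebesgue_measure_itv /= /total_length big_cons EFinD lte_fin.
case: ltP => [_|p21]; first by rewrite EFinB.
by rewrite (_ : p.2 = p.1) ?subrr ?add0e //; apply/eqP; rewrite eq_le p12 p21.
Qed.

Lemma lebesgue_measure_union_cc_le I : unit_subintervals I ->
  (lebesgue_measure (union_cc I) <= (total_length I)%:E)%E.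
Proof.
elim: I => [|p I IH] /=.
  by rewrite union_cc_nil measure0 /total_length big_nil.
move=> /andP[/andP[/andP[_ p12] _] okI].
rewrite union_cc_cons; apply: le_trans (measureU2 _ _ _) _ => //.
  exact: measurable_union_cc.
change (lebesgue_measure `[p.1, p.2]%classic + lebesgue_measure (union_cc I)
  <= (total_length (p :: I))%:E)%E.
rewrite /total_length big_cons EFinD lebesgue_measure_itv /= lte_fin.
by apply: leeD (IH okI); case: ltP; rewrite ?lee_fin ?subr_ge0.
Qed.

Lemma sandwiched_measure S t : sandwiched S t -> lebesgue_measure S = t%:E.
Proof.
move=> [I [okI disjI oS Sc <-]].
have le_leb (A B : set R) : A `<=` B -> (lebesgue_measure A <= lebesgue_measure B)%E.
  by move=> AB; exact: le_mu_ext.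
apply/eqP; rewrite eq_le (le_trans (le_leb _ _ Sc)) ?lebesgue_measure_union_cc_le //=.
by rewrite -lebesgue_measure_union_oo // le_leb.
Qed.

Lemma disjoint_oo_cat I1 I2 : disjoint_oo I1 -> disjoint_oo I2 ->
  (forall x, union_oo I1 x -> ~ union_oo I2 x) -> disjoint_oo (I1 ++ I2).
Proof.
elim: I1 => [|p I1 IH] //= [p_disj disj1] disj2 disj12; split; last first.
  by apply: IH => // x x1; apply: disj12; rewrite /union_oo /= x1 orbT.
move=> x xp; rewrite /union_oo /= has_cat => /orP[]; first exact: p_disj.
by apply: disj12; rewrite /union_oo /= xp.
Qed.

Lemma sandwichedU S1 S2 t1 t2 : sandwiched S1 t1 -> sandwiched S2 t2 ->
  (forall x, S1 x -> ~ S2 x) -> sandwiched (S1 `|` S2) (t1 + t2).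
Proof.
move=> [I1 [ok1 disj1 o1 c1 <-]] [I2 [ok2 disj2 o2 c2 <-]] S12.
exists (I1 ++ I2); split.
- by rewrite /unit_subintervals all_cat; apply/andP.
- by apply: disjoint_oo_cat => // x /o1 /S12 + /o2.
- by move=> x; rewrite /union_oo /= has_cat => /orP[/o1|/o2]; [left|right].
- by move=> x [/c1|/c2]; rewrite /union_cc /= has_cat => ->; rewrite ?orbT.
- by rewrite /total_length big_cat.
Qed.

Lemma sandwiched_bigcup (S : nat -> set R) (t : nat -> R) k :
  (forall l, (0 < l <= k)%N -> sandwiched (S l) (t l)) ->
  (forall l l' x, (0 < l <= k)%N -> (0 < l' <= k)%N -> S l x -> S l' x -> l = l') ->
  sandwiched [set x | exists2 l, (0 < l <= k)%N & S l x] (\sum_(1 <= l < k.+1) t l).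
Proof.
elim: k => [|k IH] St Sdisj.
  rewrite big_geq //; exists [::]; split => //; last by rewrite /total_length big_nil.
  by move=> x [l /andP[l0 l_le0]]; lia.
have -> : [set x | exists2 l, (0 < l <= k.+1)%N & S l x] =
    [set x | exists2 l, (0 < l <= k)%N & S l x] `|` S k.+1.
  apply/seteqP; split => x /=.
    move=> [l /andP[l0]]; rewrite leq_eqVlt => /orP[/eqP -> | lk] Sx; first by right.
    by left; exists l; rewrite ?l0.
  case=> [[l /andP[l0 lk] Sx] | Sx] /=; last by exists k.+1; rewrite ?leqnn.
  by exists l => //; rewrite l0 (leqW lk).
rewrite big_nat_recr //=; apply: sandwichedU.
- by apply: IH => [l /andP[l0 lk]|l l' x /andP[l0 lk] /andP[l'0 l'k]];
    [apply: St | apply: Sdisj]; rewrite ?l0 ?l'0 ?(leqW lk) ?(leqW l'k).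
- by apply: St; rewrite leqnn.
- move=> x [l /andP[l0 lk] Slx] Skx.
  by have := Sdisj l k.+1 x; rewrite l0 (leqW lk) leqnn => /(_ isT isT Slx Skx) lE; lia.
Qed.

End IntervalSandwich.

(** * Sum-level sets of a map with affine full branches *)

Definition digit_mass {R : realType} (l : nat) : R := (l%:R * l.+1%:R)^-1.

Fixpoint renewal_rec {R : realType} (fuel n : nat) : R :=
  if fuel is f.+1 then
    (if n is 0 then 1 else \sum_(1 <= l < n.+1) digit_mass l * renewal_rec f (n - l))
  else 1.

Definition renewal {R : realType} (n : nat) : R := renewal_rec n n.

Lemma renewal_rec_fuel {R : realType} f1 f2 n : (n <= f1)%N -> (n <= f2)%N ->
  renewal_rec f1 n = renewal_rec f2 n :> R.
Proof.
elim: f1 f2 n => [|f1 IH] [|f2] [|n] //= n_f1 n_f2.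
apply: eq_big_nat => l /andP[l1 _]; congr (_ * _); apply: IH; lia.
Qed.

Lemma renewal0 {R : realType} : renewal 0 = 1 :> R. Proof. by []. Qed.

Lemma renewalE {R : realType} n : (0 < n)%N ->
  renewal n = \sum_(1 <= l < n.+1) digit_mass l * renewal (n - l) :> R.
Proof.
case: n => // n _; apply: eq_big_nat => l /andP[l1 _].
by congr (_ * _); apply: renewal_rec_fuel; lia.
Qed.

Section SumLevel.
Variables (R : realType) (T : R -> R) (D : nat -> set R) (lo hi : nat -> R -> R -> R).
(* [lo l a b] and [hi l a b] are the endpoints of the preimage of [a, b] under the
   branch of [T] on the digit set [D l]. *)
Hypothesis map_unit : forall l x, (0 < l)%N -> D l x -> unitI (T x).
Hypothesis preimage_bounds : forall l a b, (0 < l)%N -> 0 <= a -> a <= b -> b <= 1 ->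
  [/\ 0 <= lo l a b, lo l a b <= hi l a b, hi l a b <= 1 &
      hi l a b - lo l a b = (b - a) * digit_mass l].
Hypothesis preimage_inner : forall l a b x, (0 < l)%N -> 0 <= a -> a <= b -> b <= 1 ->
  lo l a b < x < hi l a b -> D l x /\ a < T x < b.
Hypothesis preimage_outer : forall l a b x, (0 < l)%N -> 0 <= a -> a <= b -> b <= 1 ->
  D l x -> a <= T x <= b -> lo l a b <= x <= hi l a b.
Hypothesis digit_unique : forall l l' x, (0 < l)%N -> (0 < l')%N -> D l x -> D l' x -> l = l'.

Definition digit_preimage (S : set R) l := [set x | unitI x /\ D l x /\ S (T x)].

Lemma sandwiched_preimage l S t : (0 < l)%N ->
  sandwiched S t -> sandwiched (digit_preimage S l) (t * digit_mass l).
Proof.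
move=> l0 [I [okI disjI oS Sc <-]].
pose pre q := (lo l q.1 q.2, hi l q.1 q.2).
have oJ J x : unit_subintervals J -> union_oo (map pre J) x ->
    unitI x /\ D l x /\ union_oo J (T x).
  elim: J {okI disjI oS Sc} => [|q J IH] //= /andP[/andP[/andP[q1 q12] q2] okJ].
  have [lo_ge0 _ hi_le1 _] := preimage_bounds l0 q1 q12 q2.
  rewrite /union_oo /= => /orP[xq | /(IH okJ) [x01 [Dx oTx]]].
    have [Dx /[dup] Txq ->] := preimage_inner l0 q1 q12 q2 xq.
    by split => //; apply/andP; split; move: xq => /andP[]; lra.
  by rewrite /union_oo /= in oTx; rewrite oTx orbT.
exists (map pre I); split.
- elim: I okI {disjI oS Sc oJ} => [|q J IH] //= /andP[/andP[/andP[q1 q12] q2] okJ].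
  have [? ? ? _] := preimage_bounds l0 q1 q12 q2.
  by rewrite IH // andbT; apply/andP; split => //; apply/andP.
- elim: I okI disjI {oS Sc} => [|q J IH] //= /andP[/andP[/andP[q1 q12] q2] okJ] [q_disj disjJ].
  split; last exact: IH.
  move=> x xq /(oJ _ _ okJ) [_ [_ oTx]].
  by have [_ /q_disj] := preimage_inner l0 q1 q12 q2 xq.
- by move=> x /(oJ _ _ okI) [x01 [Dx /oS]].
- move=> x [_ [Dx /Sc]]; elim: I okI {disjI oS Sc oJ} => [|q J IH] //= /andP[/andP[/andP[q1 q12] q2] okJ].
  rewrite /union_cc /= => /orP[Txq | /(IH okJ) ->]; last by rewrite orbT.
  by rewrite (preimage_outer l0 q1 q12 q2 Dx Txq).
- rewrite /total_length big_map big_distrl /=.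
  elim: I okI {disjI oS Sc oJ} => [|q J IH]; first by rewrite !big_nil.
  move=> /= /andP[/andP[/andP[q1 q12] q2] okJ].
  have [_ _ _ len_q] := preimage_bounds l0 q1 q12 q2.
  by rewrite !big_cons /= len_q IH.
Qed.

Lemma cylinder_cons l s x : (0 < l)%N ->
  cylinder T D (l :: s) x <-> digit_preimage (cylinder T D s) l x.
Proof.
move=> l0; split => [[x01 cx] | [x01 [Dx [Tx01 cTx]]]].
  have Dx : D l x by exact: (cx 0%N).
  split=> //; split=> //; split=> [|i si]; first exact: map_unit Dx.
  by rewrite -iterSr; apply: (cx i.+1).
by split=> // -[|i] //= si; rewrite -[T (iter i T x)]iterS iterSr; apply: cTx.
Qed.

Lemma sumlevel0 : sumlevel T D 0 = set0.
Proof.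
by apply/seteqP; split => x // [[|l s] [] //= _ /andP[l0 _] sum_s]; lia.
Qed.

(* Level 0 is [0,1] (the empty digit string) rather than [sumlevel T D 0 = set0],
   so that the renewal recursion holds uniformly. *)
Definition level n : set R := if n == 0%N then @unitI R else sumlevel T D n.

Lemma sumlevel_decomp n : (0 < n)%N -> sumlevel T D n =
  [set x | exists2 l, (0 < l <= n)%N & digit_preimage (level (n - l)%N) l x].
Proof.
move=> n0; apply/seteqP; split => x /=.
  move=> [[|l s] [] //= _ /andP[l0 s_pos] <- /(cylinder_cons _ _ l0) [x01 [Dx cTx]]].
  exists l; first by rewrite l0 leq_addr.
  split=> //; split=> //; rewrite addKn /level.
  case: s s_pos cTx => [|l' s] /=; first by move=> _ [].
  move=> /andP[l'0 s_pos] cTx; rewrite addn_eq0 eqn0Ngt l'0 /=.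
  by exists (l' :: s); split => //=; rewrite l'0.
move=> [l /andP[l0 ln] [x01 [Dx]]]; rewrite /level.
case: eqP => [/eqP | _ [s [s0 s_pos sum_s cTx]]].
  rewrite subn_eq0 => nl Tx01; exists [:: l]; split => //=; first by rewrite l0.
    by rewrite addn0; apply/eqP; rewrite eqn_leq ln nl.
  by apply/(cylinder_cons _ _ l0); split=> //; split=> //; split.
exists (l :: s); split => //=; first by rewrite l0.
  by rewrite sum_s subnKC.
by apply/(cylinder_cons _ _ l0).
Qed.

Lemma sandwiched_level n : sandwiched (level n) (renewal n).
Proof.
elim/ltn_ind: n => -[|n] IH.
  exists [:: (0, 1)]; split => //=.
  - by rewrite ler01 !lexx.
  - by move=> x; rewrite /union_oo /= orbF => /andP[x0 x1]; rewrite /level /unitI /= !ltW.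
  - by move=> x; rewrite /level /unitI /union_cc /= orbF.
  - by rewrite /total_length big_cons big_nil subr0 addr0.
rewrite /level /= sumlevel_decomp // renewalE //.
under eq_bigr do rewrite mulrC.
apply: sandwiched_bigcup => [l /andP[l0 ln] | l l' x /andP[l0 _] /andP[l'0 _] [_ [Dx _]] [_ [D'x _]]].
  by apply: sandwiched_preimage => //; apply: IH; lia.
exact: digit_unique Dx D'x.
Qed.

Lemma lebesgue_measure_sumlevel n : (0 < n)%N ->
  lebesgue_measure (sumlevel T D n) = (renewal n)%:E.
Proof.
move=> n0; have := sandwiched_measure (sandwiched_level n).
by rewrite /level gtn_eqF.
Qed.
End SumLevel.

(** * The alternating and the classical Lüroth maps *)

Section Branch.
Variable R : realType.
Implicit Types (l : nat) (x y : R).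

(* [unbranch l] is the [l]-th branch of the classical Lüroth map and [branch l] its
   inverse; the [l]-th branch of the alternating map is [1 - unbranch l]. *)
Definition branch l y : R := (l%:R + y) / (l%:R * (l%:R + 1)).
Definition unbranch l x : R := l%:R * (l%:R + 1) * x - l%:R.

Lemma branch_slope_gt0 l : (0 < l)%N -> 0 < l%:R * (l%:R + 1) :> R.
Proof. by move=> l0; rewrite mulr_gt0 // ?ltr0n // addr_gt0 ?ltr0n. Qed.

Lemma branchK l : (0 < l)%N -> cancel (branch l) (unbranch l).
Proof.
move=> /branch_slope_gt0 /lt0r_neq0 k0 y.
by rewrite /branch /unbranch mulrCA mulfV // mulr1 addrC addKr.
Qed.

Lemma unbranchK l : (0 < l)%N -> cancel (unbranch l) (branch l).
Proof.
move=> /branch_slope_gt0 /lt0r_neq0 k0 x.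
by rewrite /branch /unbranch addrC subrK mulrC mulrA mulVf // mul1r.
Qed.

Lemma ler_unbranch l : (0 < l)%N -> {mono unbranch l : x y / x <= y}.
Proof. by move=> l0 x y; rewrite /unbranch lerD2r ler_pM2l ?branch_slope_gt0. Qed.

Lemma ltr_unbranch l : (0 < l)%N -> {mono unbranch l : x y / x < y}.
Proof. by move=> l0; apply: leW_mono; apply: ler_unbranch. Qed.

Lemma ler_branch l : (0 < l)%N -> {mono branch l : x y / x <= y}.
Proof. by move=> l0 x y; rewrite -(ler_unbranch l0) !branchK. Qed.

Lemma ltr_branch l : (0 < l)%N -> {mono branch l : x y / x < y}.
Proof. by move=> l0; apply: leW_mono; apply: ler_branch. Qed.

Lemma unbranch_inv_succ l : (0 < l)%N -> unbranch l (l.+1%:R)^-1 = 0.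
Proof. by move=> l0; rewrite /unbranch -natr1 -mulrA mulfV ?mulr1 ?subrr // natr1. Qed.

Lemma unbranch_inv l : (0 < l)%N -> unbranch l (l%:R)^-1 = 1.
Proof.
move=> l0; rewrite /unbranch mulrAC mulfV ?pnatr_eq0 -?lt0n //.
by rewrite mul1r addrAC subrr add0r.
Qed.

Lemma branch_bounds l a b : (0 < l)%N -> 0 <= a -> a <= b -> b <= 1 ->
  [/\ 0 <= branch l a, branch l a <= branch l b, branch l b <= 1 &
      branch l b - branch l a = (b - a) * digit_mass l].
Proof.
move=> l0 a0 ab b1; rewrite ler_branch //; split => //.
- by rewrite divr_ge0 ?addr_ge0 // ltW ?branch_slope_gt0.
- apply: le_trans (_ : branch l 1 <= 1); first by rewrite ler_branch.
  by rewrite -[X in branch l X](unbranch_inv l0) unbranchK // invf_le1 ?ler1n ?ltr0n.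
- by rewrite /branch /digit_mass -mulrBl -natr1; congr (_ * _); ring.
Qed.

Lemma unbranch_overlap l l' x : (0 < l)%N -> (l < l')%N ->
  0 <= unbranch l x -> unbranch l' x <= 1 -> unbranch l x = 0 /\ unbranch l' x = 1.
Proof.
move=> l0 ll'.
have -> : unbranch l x = l%:R * ((l%:R + 1) * x - 1) by rewrite /unbranch; ring.
have -> : unbranch l' x = (l'%:R + 1) * (l'%:R * x - 1) + 1 by rewrite /unbranch; ring.
rewrite pmulr_rge0 ?ltr0n // subr_ge0 => lo_x h1.
have : (l'%:R + 1) * (l'%:R * x - 1) <= 0 by lra.
have L'1 : 0 < l'%:R + 1 :> R by rewrite natr1 ltr0n.
rewrite (pmulr_rle0 _ L'1) subr_le0 => x_hi.
have L1 : 0 < l%:R + 1 :> R by rewrite natr1 ltr0n.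
have x0 : 0 < x by rewrite -(pmulr_rgt0 _ L1); lra.
have : (l%:R + 1) * x <= l'%:R * x by rewrite ler_pM2r // natr1 ler_nat.
move=> x_mono; have -> : (l%:R + 1) * x = 1 by lra.
have -> : l'%:R * x = 1 by lra.
by rewrite subrr !mulr0 add0r.
Qed.

End Branch.

Section Alternating.
Variable R : realType.
Implicit Types (l : nat) (x : R).

Lemma harmA_unbranch l x : (0 < l)%N -> harmA l x <-> 0 < unbranch l x <= 1.
Proof.
move=> l0; rewrite /harmA /= -(ltr_unbranch l0 _ x) unbranch_inv_succ //.
by rewrite -(ler_unbranch l0 x) unbranch_inv.
Qed.

Lemma LaltE l x : (0 < l)%N -> harmA l x -> Lalt x = 1 - unbranch l x.
Proof.
move=> l0 /andP[lx xl]; have x0 : 0 < x by apply: le_lt_trans lx; rewrite invr_ge0.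
rewrite /Lalt gt_eqF //=.
have -> : Num.floor x^-1 = l%:Z.
  apply: floor_def; rewrite intrD -[(l%:Z)%:~R]/(l%:R : R) natr1.
  by rewrite -[l%:R]invrK -[l.+1%:R]invrK lef_pV2 ?ltf_pV2 ?xl ?posrE ?invr_gt0 ?ltr0n.
by rewrite /unbranch -[(l%:Z)%:~R]/(l%:R : R); ring.
Qed.

Lemma Lalt_unit l x : (0 < l)%N -> harmA l x -> unitI (Lalt x).
Proof.
move=> l0 /[dup] /(harmA_unbranch _ l0) y01 /(LaltE l0) ->.
by rewrite /unitI /=; lra.
Qed.

Lemma harmA_unique l l' x : (0 < l)%N -> (0 < l')%N -> harmA l x -> harmA l' x -> l = l'.
Proof.
wlog ll' : l l' / (l <= l')%N.
  by move=> wlog l0 l'0 xl xl'; case: (leqP l l') => [|/ltnW] ll';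
    [apply: wlog | apply/esym/wlog].
move=> l0 l'0 /(harmA_unbranch _ l0)/andP[y0 _] /(harmA_unbranch _ l'0)/andP[_ y1].
apply/eqP; rewrite eqn_leq ll' leqNgt; apply/negP => lt_ll'.
by have [] := unbranch_overlap l0 lt_ll' (ltW y0) y1; lra.
Qed.

Lemma lebesgue_measure_Lalt_level n : (0 < n)%N ->
  lebesgue_measure (@Lalt_level R n) = (renewal n)%:E.
Proof.
move=> n0; rewrite /Lalt_level.
apply: (@lebesgue_measure_sumlevel R (@Lalt R) (@harmA R)
  (fun l a b => branch l (1 - b)) (fun l a b => branch l (1 - a))) => //.
- exact: Lalt_unit.
- move=> l a b l0 a0 ab b1.
  have [||| ? ? ? ->] := @branch_bounds R l (1 - b) (1 - a) l0; try lra.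
  by split => //; congr (_ * _); ring.
- move=> l a b x l0 a0 ab b1; rewrite -[x](unbranchK l0) !ltr_branch //.
  move=> y_ab; have xA : harmA l (branch l (unbranch l x)).
    by apply/(harmA_unbranch _ l0); rewrite branchK //; lra.
  by split => //; rewrite (LaltE l0 xA) branchK //; lra.
- move=> l a b x l0 a0 ab b1 xA; rewrite (LaltE l0 xA) => Tx_ab.
  by rewrite -[x](unbranchK l0) !ler_branch //; lra.
- exact: harmA_unique.
Qed.

End Alternating.

Section Classical.
Variable R : realType.
Implicit Types (l : nat) (x : R).

Lemma lurB_unbranch l x : (1 < l)%N -> lurB l x <-> 0 <= unbranch l x < 1.
Proof.
move=> l1; have l0 := ltnW l1.
rewrite /lurB gtn_eqF //= -(ler_unbranch l0 _ x) unbranch_inv_succ //.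
by rewrite -(ltr_unbranch l0 x) unbranch_inv.
Qed.

Lemma lurB1_unbranch x : lurB 1 x <-> 0 <= unbranch 1 x <= 1.
Proof.
have -> : unbranch 1 x = 2 * x - 1 by rewrite /unbranch; ring.
rewrite /lurB /= -[2^-1]div1r ler_pdivrMr //.
by split => /andP[h1 h2]; apply/andP; split; lra.
Qed.

Lemma lurB_unbranch_cc l x : (0 < l)%N -> lurB l x -> 0 <= unbranch l x <= 1.
Proof.
case: l => [|[|l]] // _; first by move/lurB1_unbranch.
by move/lurB_unbranch => /(_ isT) /andP[-> /ltW].
Qed.

Lemma unbranch_oo_lurB l x : (0 < l)%N -> 0 < unbranch l x < 1 -> lurB l x.
Proof.
case: l => [|[|l]] // _ /andP[y0 y1].
  by apply/lurB1_unbranch; rewrite ltW ?y1 ?ltW.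
by apply/lurB_unbranch; rewrite ?ltW.
Qed.

Lemma LclE l x : (0 < l)%N -> lurB l x -> Lcl x = unbranch l x.
Proof.
move=> l0 xB; have x0 : 0 < x.
  by move: xB; case: l l0 => [|[|l]] //= _; rewrite /lurB /=;
    move=> /andP[+ _]; apply: lt_le_trans; rewrite invr_gt0.
rewrite /Lcl gt_eqF //=; case: l l0 xB => [|[|l]] // _.
  move=> /lurB1_unbranch /andP[y0 _]; move: y0.
  rewrite /unbranch -[2^-1]div1r ler_pdivrMr // => y0.
  by rewrite ifT; [ring | lra].
rewrite /lurB /= => /andP[lx xl].
have -> : (2^-1 <= x) = false.
  apply/negbTE; rewrite -ltNge (lt_le_trans xl) // lef_pV2 ?posrE ?ltr0n //.
  by rewrite ler_nat.
have -> : Num.ceil x^-1 = l.+3%:Z.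
  apply: ceil_def; rewrite (_ : l.+3%:Z - 1 = l.+2%:Z); last by rewrite -addn1 PoszD addrK.
  rewrite -[(l.+2%:Z)%:~R]/(l.+2%:R : R) -[(l.+3%:Z)%:~R]/(l.+3%:R : R).
  by rewrite -[l.+2%:R]invrK -[l.+3%:R]invrK ltf_pV2 ?lef_pV2 ?xl ?posrE ?invr_gt0 ?ltr0n.
rewrite (_ : l.+3%:Z - 1 = l.+2%:Z); last by rewrite -addn1 PoszD addrK.
by rewrite /unbranch -[(l.+2%:Z)%:~R]/(l.+2%:R : R).
Qed.

Lemma Lcl_unit l x : (0 < l)%N -> lurB l x -> unitI (Lcl x).
Proof. by move=> l0 /[dup] /(lurB_unbranch_cc l0) y01 /(LclE l0) ->. Qed.

Lemma lurB_unique l l' x : (0 < l)%N -> (0 < l')%N -> lurB l x -> lurB l' x -> l = l'.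
Proof.
wlog ll' : l l' / (l <= l')%N.
  by move=> wlog l0 l'0 xl xl'; case: (leqP l l') => [|/ltnW] ll';
    [apply: wlog | apply/esym/wlog].
move=> l0 l'0 /(lurB_unbranch_cc l0)/andP[y0 _] xl'.
apply/eqP; rewrite eqn_leq ll' leqNgt; apply/negP => lt_ll'.
have /andP[_ y1] := (lurB_unbranch x (leq_ltn_trans l0 lt_ll')).1 xl'.
by have [] := unbranch_overlap l0 lt_ll' y0 (ltW y1); lra.
Qed.

Lemma lebesgue_measure_Lcl_level n : (0 < n)%N ->
  lebesgue_measure (@Lcl_level R n) = (renewal n)%:E.
Proof.
move=> n0; rewrite /Lcl_level.
apply: (@lebesgue_measure_sumlevel R (@Lcl R) (@lurB R)
  (fun l a b => branch l a) (fun l a b => branch l b)) => //.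
- exact: Lcl_unit.
- by move=> l a b l0; apply: branch_bounds.
- move=> l a b x l0 a0 ab b1; rewrite -[x](unbranchK l0) !ltr_branch // => y_ab.
  have xB : lurB l (branch l (unbranch l x)).
    by apply: (unbranch_oo_lurB l0); rewrite branchK //; lra.
  by split => //; rewrite (LclE l0 xB) branchK.
- move=> l a b x l0 a0 ab b1 xB; rewrite (LclE l0 xB) => Tx_ab.
  by rewrite -[x](unbranchK l0) !ler_branch.
- exact: lurB_unique.
Qed.

End Classical.

(** * Asymptotics of the renewal sequence *)

Section Renewal.
Variable R : realType.
Local Notation u := (@renewal R).
Local Notation H := (harm R).
Local Notation a := (@harmonic R).

Lemma renewal_ge0 n : 0 <= u n.
Proof.
elim/ltn_ind: n => -[|n] IH; first by rewrite renewal0.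
rewrite renewalE // big_nat_cond; apply: sumr_ge0 => l /andP[/andP[l1 _] _].
by rewrite mulr_ge0 ?invr_ge0 ?mulr_ge0 ?IH //; lia.
Qed.

Lemma harmonic_tail l : digit_mass l.+1 + a l.+1 = a l.
Proof.
rewrite /digit_mass /= -!natr1.
have l1 : l%:R + 1 != 0 :> R by rewrite natr1 pnatr_eq0.
have l2 : l%:R + 1 + 1 != 0 :> R by rewrite !natr1 pnatr_eq0.
by field; apply/andP.
Qed.

Lemma renewal_harmonic_conv n : \sum_(0 <= l < n.+1) a l * u (n - l)%N = 1.
Proof.
elim: n => [|n IH]; first by rewrite big_nat1 renewal0 /= mulr1 invr1.
rewrite big_nat_recl // subn0 renewalE // big_add1 /= invr1 mul1r.
rewrite -big_split /= -[RHS]IH; apply: eq_big_nat => l /andP[_ ln].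
by rewrite subSS -mulrDl harmonic_tail.
Qed.

Lemma renewal_harmonic_conv_rev n : \sum_(0 <= k < n.+1) a (n - k)%N * u k = 1.
Proof.
rewrite -[RHS](renewal_harmonic_conv n) big_nat_rev /=; apply: eq_big_nat => l /andP[_ ln].
by rewrite add0n subSS subKn // -ltnS.
Qed.

Definition renewal_diff n := if n is n'.+1 then u n - u n' else 1.

Lemma renewal_diff_conv m : \sum_(0 <= k < m.+2) a (m.+1 - k)%N * renewal_diff k = 0.
Proof.
rewrite big_nat_recl //= mulr1.
under eq_big_nat => k /andP[_ km] do rewrite mulrBr subSS.
rewrite sumrB addrA.
have := renewal_harmonic_conv_rev m.+1; rewrite big_nat_recl //= renewal0 mulr1 => ->.
by rewrite renewal_harmonic_conv_rev subrr.
Qed.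

Lemma harmonic_logconvex j N : (j <= N)%N -> a j.+1 * a N <= a N.+1 * a j.
Proof.
move=> jN; rewrite /= -!invfM lef_pV2 ?posrE ?mulr_gt0 ?ltr0n // -!natrM ler_nat.
nia.
Qed.

Lemma renewal_diff_rec n : a n.+1 * renewal_diff n.+2 =
  \sum_(0 <= k < n.+2) (a n.+2 * a (n.+1 - k)%N - a n.+1 * a (n.+2 - k)%N) * renewal_diff k.
Proof.
have E1 := renewal_diff_conv n.+1; have E0 := renewal_diff_conv n.
have a0 : a 0 = 1 by rewrite /= invr1.
rewrite big_nat_recr // subnn a0 mul1r in E1.
under eq_bigr do rewrite mulrBl -!mulrA.
rewrite sumrB -!mulr_sumr E0 mulr0 sub0r -mulrN; congr (_ * _).
by apply/eqP; rewrite -addr_eq0 addrC E1.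
Qed.

(* Kaluza's argument: the log-convexity of [a] makes the coefficients of
   [renewal_diff_rec] nonnegative. *)
Lemma renewal_diff_le0 n : (0 < n)%N -> renewal_diff n <= 0.
Proof.
elim/ltn_ind: n => -[|[|n]] IH // _.
  rewrite /= renewal0 renewalE // big_nat1 renewal0 mulr1 subr_le0 /digit_mass.
  by rewrite invf_le1 // mul1r ler1n.
rewrite -(pmulr_rle0 _ (harmonic_gt0 n.+1)) renewal_diff_rec.
rewrite big_nat_recl // !subn0 [a n.+1 * _]mulrC subrr mul0r add0r.
rewrite big_nat_cond; apply: sumr_le0 => k /andP[/andP[_ kn] _].
rewrite mulr_ge0_le0 ?IH //.
have -> : (n.+1 - k.+1 = n - k)%N by lia.
have -> : (n.+2 - k.+1 = (n - k).+1)%N by lia.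
by rewrite subr_ge0 [a n.+1 * _]mulrC harmonic_logconvex //; lia.
Qed.

Lemma renewal_nonincreasing m n : (m <= n)%N -> u n <= u m.
Proof.
elim: n => [|n IH]; first by rewrite leqn0 => /eqP ->.
rewrite leq_eqVlt => /orP[/eqP -> // | /IH].
by apply: le_trans; have := renewal_diff_le0 (ltn0Sn n); rewrite /= subr_le0.
Qed.

Lemma harmS n : H n.+1 = H n + (n.+1%:R)^-1.
Proof. by rewrite /harm big_nat_recr. Qed.

Lemma harm0 : H 0 = 0. Proof. by rewrite /harm big_geq. Qed.

Lemma harmE n : H n = \sum_(0 <= l < n) a l.
Proof. by rewrite /harm big_add1. Qed.

Lemma le_harm : {homo H : m n / (m <= n)%N >-> m <= n}.
Proof.
move=> m n /subnK <-; elim: (n - m)%N => [|k IH]; first by rewrite add0n.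
by rewrite addSn harmS (le_trans IH) // lerDl invr_ge0.
Qed.

Lemma harm_ge1 n : (0 < n)%N -> 1 <= H n.
Proof. by move/le_harm; apply: le_trans; rewrite harmS harm0 add0r invr1. Qed.

Lemma harm_gt0 n : (0 < n)%N -> 0 < H n.
Proof. by move/harm_ge1; apply: lt_le_trans. Qed.

Lemma harm_gt1 n : (1 < n)%N -> 1 < H n.
Proof. by move/le_harm; apply: lt_le_trans; rewrite !harmS harm0 add0r invr1 ltrDl. Qed.

Lemma ln_succ_le (y : R) : 0 < y -> ln (y + 1) <= ln y + y^-1.
Proof.
move=> y0; have -> : y + 1 = y * (1 + y^-1) by rewrite mulrDr mulr1 mulfV ?gt_eqF.
rewrite lnM ?posrE ?addr_gt0 ?invr_gt0 // lerD2l le_ln1Dx //.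
by rewrite (lt_trans (ltrN10 R)) ?invr_gt0.
Qed.

Lemma ln_succ_ge (y : R) : 0 < y -> ln y + (y + 1)^-1 <= ln (y + 1).
Proof.
move=> y0; have y1 : 0 < y + 1 by rewrite addr_gt0.
have yV : (y + 1)^-1 < 1 by rewrite invf_lt1 // ltrDr.
have -> : ln y = ln (y + 1) + ln (1 - (y + 1)^-1).
  rewrite -lnM ?posrE ?subr_gt0 //.
  by congr ln; rewrite mulrBr mulr1 mulfV ?gt_eqF // addrK.
have : ln (1 - (y + 1)^-1) <= - (y + 1)^-1 by apply: le_ln1Dx; rewrite ltrN2.
lra.
Qed.

Lemma ln_le_harm n : ln (n.+1%:R) <= H n.
Proof.
elim: n => [|n IH]; first by rewrite ln1 harm0.
rewrite harmS -natr1; apply: le_trans (ln_succ_le _) _; first by rewrite ltr0n.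
by rewrite lerD2r.
Qed.

Lemma harm_le_ln n : (0 < n)%N -> H n <= 1 + ln (n%:R).
Proof.
case: n => // n _; elim: n => [|n IH]; first by rewrite ln1 harmS harm0 add0r invr1 addr0.
rewrite harmS (le_trans (lerD IH (lexx _))) // -addrA lerD2l -[n.+2%:R]natr1.
by apply: ln_succ_ge; rewrite ltr0n.
Qed.

Lemma harm_cvgy : H n @[n --> \oo] --> +oo.
Proof.
apply/cvgryPge => M; near=> n; apply: le_trans (ln_le_harm n).
rewrite -[M]expRK ler_ln ?posrE ?expR_gt0 ?ltr0n //.
apply: le_trans (ltW (truncnS_gt (expR M))) _; rewrite ler_nat ltnS.
by near: n; apply: nbhs_infty_ge.
Unshelve. all: by end_near. Qed.

Lemma invharm_cvg0 : (H n)^-1 @[n --> \oo] --> 0.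
Proof.
apply/(@gtr0_cvgV0 _ _ _ _ H); last exact: harm_cvgy.
by near=> n; apply: harm_gt0; near: n; apply: nbhs_infty_gt.
Unshelve. all: by end_near. Qed.

Lemma harm_div_cvg0 : H n / n%:R @[n --> \oo] --> 0.
Proof.
rewrite -cvg_shiftS; have := cesaro (@cvg_harmonic R).
apply: cvg_trans; apply: near_eq_cvg; near=> n.
by rewrite /arithmetic_mean /series /= harmE mulrC.
Unshelve. all: by end_near. Qed.

Lemma ln_div_harm_cvg1 : ln (n%:R : R) / H n @[n --> \oo] --> (1 : R).
Proof.
apply: (@squeeze_cvgr _ _ _ _ (fun n => 1 - (H n)^-1) (fun=> 1)); last exact: cvg_cst.
  near=> n; have n0 : (0 < n)%N by near: n; apply: nbhs_infty_gt.
  have Hn := harm_gt0 n0.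
  have lnH : ln n%:R <= H n.
    by rewrite (le_trans _ (ln_le_harm n)) // ler_ln ?posrE ?ltr0n // ler_nat.
  rewrite ler_pdivrMr // mul1r lnH andbT ler_pdivlMr // mulrBl mul1r mulVf ?gt_eqF //.
  by have := harm_le_ln n0; lra.
rewrite -[X in _ --> X]subr0; apply: cvgB; [exact: cvg_cst | exact: invharm_cvg0].
Unshelve. all: by end_near. Qed.

Lemma renewal_harmS_le1 n : u n * H n.+1 <= 1.
Proof.
rewrite -(renewal_harmonic_conv n) harmE mulr_sumr; apply: ler_sum_nat => l /andP[_ ln].
by rewrite mulrC ler_pM2l ?harmonic_gt0 // renewal_nonincreasing // leq_subr.
Qed.

Lemma renewal_le_invharm n : u n <= (H n.+1)^-1.
Proof.
have Hn := harm_gt0 (ltn0Sn n).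
by rewrite -(ler_pM2r Hn) mulVf ?gt_eqF // renewal_harmS_le1.
Qed.

Lemma renewal_harm_le1 n : u n * H n <= 1.
Proof.
apply: le_trans (renewal_harmS_le1 n).
by rewrite ler_wpM2l ?renewal_ge0 // le_harm.
Qed.

(* Split the renewal identity at [2N]: use [u k <= 1 / H k.+1] for [k <= N] and
   [u k <= u N] beyond. *)
Lemma renewal_harm_ge N : 1 <= u N * H N + a N * \sum_(0 <= k < N.+1) (H k.+1)^-1.
Proof.
rewrite -[X in X <= _](renewal_harmonic_conv_rev (N + N)) (big_cat_nat _ (n := N.+1)) //;
  last by lia.
rewrite addrC; apply: lerD.
  rewrite mulr_sumr; apply: ler_sum_nat => k /andP[_ kN].
  apply: ler_pM; rewrite ?harmonic_ge0 ?renewal_ge0 ?renewal_le_invharm //=.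
  by rewrite lef_pV2 ?posrE ?ltr0n // ler_nat; lia.
apply: (@le_trans _ _ (\sum_(N.+1 <= k < (N + N).+1) a (N + N - k)%N * u N)).
  apply: ler_sum_nat => k /andP[Nk _].
  by rewrite ler_pM2l ?harmonic_gt0 // renewal_nonincreasing // ltnW.
rewrite -mulr_suml mulrC harmE -{1}(add0n N.+1) big_addn big_nat_rev.
have -> : ((N + N).+1 - N.+1 = N)%N by lia.
rewrite le_eqVlt; apply/orP; left; apply/eqP; congr (_ * _).
by apply: eq_big_nat => i /andP[_ iN]; congr a; lia.
Qed.

Lemma renewal_harm_cvg1 : u n * H n @[n --> \oo] --> (1 : R).
Proof.
apply: (@squeeze_cvgr _ _ _ _ (fun n => 1 - a n * \sum_(0 <= k < n.+1) (H k.+1)^-1)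
  (fun=> 1)); last exact: cvg_cst.
  by near=> n; rewrite renewal_harm_le1 andbT lerBlDr renewal_harm_ge.
rewrite -[X in _ --> X]subr0; apply: cvgB; first exact: cvg_cst.
have := invharm_cvg0; rewrite -(cvg_shiftS (fun k => (H k)^-1)) => /cesaro.
by apply: cvg_trans; apply: near_eq_cvg; near=> n.
Unshelve. all: by end_near. Qed.

Lemma invharm_le_delta k : (0 < k)%N ->
  (H k.+1)^-1 * (1 - (H k)^-1) <= k.+1%:R / H k.+1 - k%:R / H k.
Proof.
move=> k0; have Hk := harm_gt0 k0; have Hk1 := harm_gt0 (ltn0Sn k).
rewrite -subr_ge0.
have -> : k.+1%:R / H k.+1 - k%:R / H k - (H k.+1)^-1 * (1 - (H k)^-1) =
    (k.+1%:R)^-1 / (H k * H k.+1).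
  have k1 : k%:R + 1 != 0 :> R by rewrite natr1 pnatr_eq0.
  have p0 : 0 < H k * (k%:R + 1) + 1.
    by rewrite addr_gt0 // mulr_gt0 // natr1 ltr0n.
  by rewrite harmS -[k.+1%:R]natr1; field; rewrite k1 !gt_eqF.
by rewrite divr_ge0 ?invr_ge0 // mulr_ge0 // ltW.
Qed.

(* Beyond [K], summing [invharm_le_delta] telescopes [k / H k]. *)
Lemma sum_invharm_le K n : (1 < K <= n)%N ->
  \sum_(1 <= k < n.+1) (H k)^-1 <= K%:R + n%:R / H n * (H K / (H K - 1)).
Proof.
move=> /andP[K1 Kn]; have K0 := ltnW K1.
have HK1 := harm_gt1 K1.
set q := 1 - (H K)^-1.
have q0 : 0 < q by rewrite subr_gt0 invf_lt1 // (lt_trans ltr01).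
have -> : H K / (H K - 1) = q^-1.
  have HK0 : H K != 0 by rewrite gt_eqF // (lt_trans ltr01).
  have HK_1 : H K - 1 != 0 by rewrite subr_eq0 gt_eqF.
  by rewrite /q; field; rewrite HK0 HK_1.
rewrite (big_cat_nat _ (n := K.+1)) //=.
apply: lerD.
  apply: le_trans (_ : \sum_(1 <= k < K.+1) (1 : R) <= _).
    by apply: ler_sum_nat => k /andP[k1 _]; rewrite invf_le1 ?harm_gt0 ?harm_ge1.
  by rewrite sumr_const_nat subn1.
rewrite big_add1 /=.
apply: (@le_trans _ _ (\sum_(K <= k < n) (k.+1%:R / H k.+1 - k%:R / H k) / q)).
  apply: ler_sum_nat => k /andP[Kk _]; rewrite ler_pdivlMr //.
  apply: le_trans (invharm_le_delta (leq_trans K0 Kk)).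
  apply: ler_wpM2l; first by rewrite invr_ge0 ltW ?harm_gt0.
  by rewrite lerD2l lerN2 lef_pV2 ?posrE ?harm_gt0 ?le_harm // (leq_trans K0).
rewrite -mulr_suml (telescope_sumr (fun k => k%:R / H k) Kn) ler_pM2r ?invr_gt0 //.
by rewrite gerDl oppr_le0 divr_ge0 // ltW ?harm_gt0.
Qed.

Lemma renewal_sum_le K n : (1 < K <= n)%N ->
  (\sum_(1 <= k < n.+1) u k) * (H n / n%:R) <= K%:R * (H n / n%:R) + H K / (H K - 1).
Proof.
move=> /[dup] /andP[K1 Kn] K1n; have n0 : (0 < n)%N by apply: leq_trans Kn; apply: ltnW.
have Hn := harm_gt0 n0; have n0R : 0 < n%:R :> R by rewrite ltr0n.
have HK1 := harm_gt1 K1.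
have sum_u : \sum_(1 <= k < n.+1) u k <= \sum_(1 <= k < n.+1) (H k)^-1.
  apply: ler_sum_nat => k /andP[k1 _]; apply: le_trans (renewal_le_invharm k) _.
  by rewrite lef_pV2 ?posrE ?harm_gt0 ?le_harm.
apply: le_trans (ler_wpM2r _ (le_trans sum_u (sum_invharm_le K1n))) _.
  by rewrite divr_ge0 // ltW.
rewrite mulrDl lerD2l le_eqVlt; apply/orP; left; apply/eqP.
have HK_1 : H K - 1 != 0 by rewrite subr_eq0 gt_eqF.
by field; rewrite HK_1 !gt_eqF.
Qed.

Lemma renewal_sum_ge K n e : (0 < K <= n)%N ->
  (forall k, (K <= k)%N -> 1 - e <= u k * H k) ->
  (n.+1 - K)%:R * (1 - e) <= (\sum_(1 <= k < n.+1) u k) * H n.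
Proof.
move=> /andP[K0 Kn] uH_ge.
rewrite (big_cat_nat _ (n := K)) //=; last by rewrite ltnW.
rewrite mulrDl -[X in X <= _]add0r; apply: lerD.
  rewrite mulr_ge0 ?(ltW (harm_gt0 (leq_trans K0 Kn))) //.
  by apply: sumr_ge0 => k _; apply: renewal_ge0.
rewrite mulrC mulr_natr -sumr_const_nat big_distrl; apply: ler_sum_nat => k /andP[Kk kn].
by apply: le_trans (uH_ge k Kk) _; rewrite ler_wpM2l ?renewal_ge0 // le_harm.
Qed.

Lemma renewal_sum_cvg1 :
  (\sum_(1 <= k < n.+1) u k) / (n%:R / H n) @[n --> \oo] --> (1 : R).
Proof.
apply/cvgrPdist_le => e e0; have e2 : 0 < e / 2 by rewrite divr_gt0.
have [K1 _ uH_ge] : \forall k \near \oo, 1 - e / 2 <= u k * H k.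
  move/cvgrPdist_le : renewal_harm_cvg1 => /(_ _ e2).
  by apply: filterS => k; rewrite ler_distlC => /andP[].
have [K2 _ H_ge] : \forall k \near \oo, 1 + (e / 2)^-1 <= H k.
  by move/cvgryPge : harm_cvgy; apply.
pose K := maxn (maxn K1 K2) 2.
have K1K : (K1 <= K)%N by rewrite /K !leq_max leqnn.
have K2K : (K2 <= K)%N by rewrite /K !leq_max leqnn !orbT.
have K_gt1 : (1 < K)%N by rewrite /K leq_max leqnn orbT.
have K0R : 0 < K%:R :> R by rewrite ltr0n ltnW.
have H_ratio : H K / (H K - 1) <= 1 + e / 2.
  have HK := H_ge K K2K.
  have HK1 : 0 < H K - 1 by rewrite subr_gt0 (lt_le_trans _ HK) // ltrDl invr_gt0.
  rewrite ler_pdivrMr //.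
  have : e / 2 * (e / 2)^-1 <= e / 2 * (H K - 1) by rewrite ler_pM2l //; lra.
  by rewrite mulfV ?gt_eqF //; lra.
near=> n.
have Kn : (K <= n)%N by near: n; apply: nbhs_infty_ge.
have nK : K%:R / (e / 2) <= n%:R by near: n; apply: nbhs_infty_ger.
have Hn_small : H n / n%:R <= e / 2 / K%:R.
  near: n; move/cvgr0_norm_le : harm_div_cvg0 => /(_ _ (divr_gt0 e2 K0R)).
  by apply: filterS => n; apply: le_trans (ler_norm _).
have n0 : (0 < n)%N by apply: leq_trans Kn; apply: ltnW.
have n0R : 0 < n%:R :> R by rewrite ltr0n.
have Hn := harm_gt0 n0.
rewrite ler_distlC invf_div; apply/andP; split.
  have K0n : (0 < K <= n)%N by rewrite ltnW.
  have := renewal_sum_ge K0n (fun k Kk => uH_ge k (leq_trans K1K Kk)).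
  rewrite mulrA ler_pdivlMr //; apply: le_trans.
  rewrite natrB ?(leqW Kn) // -natr1.
  have : K%:R <= n%:R * (e / 2) by rewrite -ler_pdivrMr.
  have : 1 <= K%:R :> R by rewrite ler1n ltnW.
  nra.
have K1n : (1 < K <= n)%N by rewrite K_gt1.
apply: le_trans (renewal_sum_le K1n) _.
have : K%:R * (H n / n%:R) <= e / 2 by rewrite mulrC -ler_pdivlMr.
by move: H_ratio; lra.
Unshelve. all: by end_near. Qed.

End Renewal.

Lemma lebesgue_measure_levels_eq (R : realType) n :
  lebesgue_measure (@Lcl_level R n) = lebesgue_measure (@Lalt_level R n).
Proof.
case: n => [|n]; first by rewrite /Lcl_level /Lalt_level !sumlevel0.
by rewrite lebesgue_measure_Lalt_level // lebesgue_measure_Lcl_level.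
Qed.

Theorem corollary5p2 (R : realType) :
  let lam := (@lebesgue_measure R) in
  (* (1) *)
  ((forall n : nat,
      (\sum_(1 <= k < n.+1) lam (@Lcl_level R k))%E
      = (\sum_(1 <= k < n.+1) lam (@Lalt_level R k))%E) /\
   asym_equiv (fun n => \sum_(1 <= k < n.+1) fine (lam (@Lcl_level R k)))
              (fun n => n%:R / @harm R n) /\
   asym_equiv (fun n => n%:R / @harm R n) (fun n => n%:R / ln (n%:R : R)))
  /\
  (* (2) *)
  ((forall n : nat, lam (@Lcl_level R n) = lam (@Lalt_level R n)) /\
   asym_equiv (fun n => fine (lam (@Lcl_level R n))) (fun n => (@harm R n)^-1) /\
   asym_equiv (fun n => (@harm R n)^-1) (fun n => (ln (n%:R : R))^-1)).
Proof.
move=> lam; rewrite {}/lam /asym_equiv.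
have fine_lam k : (0 < k)%N -> fine (lebesgue_measure (@Lcl_level R k)) = renewal k.
  by move=> k0; rewrite lebesgue_measure_Lcl_level.
split; split; last split.
- by move=> n; apply: eq_bigr => k _; rewrite lebesgue_measure_levels_eq.
- split; last first.
    have := @ln_div_harm_cvg1 R; apply: cvg_trans; apply: near_eq_cvg; near=> n.
    have n0 : n%:R != 0 :> R by rewrite pnatr_eq0 -lt0n; near: n; exact: nbhs_infty_gt.
    by rewrite invf_div [RHS]mulrC mulrA mulfVK.
  have := @renewal_sum_cvg1 R; apply: cvg_trans; apply: near_eq_cvg; near=> n.
  by congr (_ / _); apply: eq_big_nat => k /andP[k0 _]; rewrite fine_lam.
- exact: lebesgue_measure_levels_eq.
- have := @renewal_harm_cvg1 R; apply: cvg_trans; apply: near_eq_cvg; near=> n.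
  by rewrite invrK fine_lam //; near: n; exact: nbhs_infty_gt.
- have := @ln_div_harm_cvg1 R; apply: cvg_trans; apply: near_eq_cvg; near=> n.
  by rewrite invrK mulrC.
Unshelve. all: by end_near. Qed.
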